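(* Let $T_1,T_2\subseteq\mathbb{R}^n$ be action sets. Then $T_1\subseteq T_2$ if and only if $\mathbf{W}(T_1)\supseteq\mathbf{W}(T_2)$, where $\mathbf{W}(T)=\bigcap_{t\in T}\mathbf{W}(t)$.
   Context: Single-commodity network pricing setting: $G=(\mathcal{V},\mathcal{A})$ directed graph, arc costs $c\ge0$, nonempty tolled arc set $\mathcal{A}_1\subsetneq\mathcal{A}$, $n=|\mathcal{A}_1|$, $N$ node–arc incidence matrix, single origin $o$ and destination $d$ connected by a toll-free path, $b_o=1$, $b_d=-1$, $b_i=0$ otherwise, $\mathcal{X}=\{x\in\mathbb{R}^{\mathcal{A}}: Nx=b,\ x\ge0\}$, $x_{\mathcal{A}_1}$ the restriction of $x$ to $\mathcal{A}_1$. Let $f(t)=\min\{c^\top x+t^\top x_{\mathcal{A}_1}: x\in\mathcal{X}\}$ for $t\in\mathbb{R}^n$, $t\ge0$, and $f(t)=-\infty$ otherwise. An action set is a set $T=\{t:(t,z)\in F\text{ for some }z\}$ where $F$ is a face of $\operatorname{epi}(-f)$ whose affine hull's direction space does not contain $(0,1)$. For $t\ge0$, $\mathbf{W}(t)$ is the set of $w$ such that $(w,x)$ is optimal for some $x$ in $\min_{w,x}\{c^\top x+t^\top w: x_{\mathcal{A}_1}\le w,\ Nx=b,\ w\ge0,\ x\ge0\}$. *)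

From HB Require Import structures.
From mathcomp Require Import all_boot all_order all_algebra.
From mathcomp Require Import boolp classical_sets reals constructive_ereal ereal.
Set Implicit Arguments. Unset Strict Implicit. Unset Printing Implicit Defensive.
Import Order.TTheory GRing.Theory Num.Theory.
Local Open Scope classical_set_scope.
Local Open Scope ring_scope.

(* Arcs are A1 + A0 : tolled arcs (inl) and toll-free arcs (inr).
   Vectors of R^n, n = |A1|, are functions A1 -> R. *)
Section NetworkPricing.
Variables (R : realType) (V A1 A0 : finType).
Notation Arc := (A1 + A0)%type.
Variables (tl hd : Arc -> V) (c : Arc -> R) (o d : V).

Definition inc (v : V) (a : Arc) : R := (tl a == v)%:R - (hd a == v)%:R.
Definition bvec (v : V) : R := (v == o)%:R - (v == d)%:R.

Definition flowX (x : Arc -> R) : Prop :=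
  (forall v, \sum_(a : Arc) inc v a * x a = bvec v) /\ (forall a, 0 <= x a).

Definition cost_t (t : A1 -> R) (x : Arc -> R) : R :=
  \sum_(a : Arc) c a * x a + \sum_(i : A1) t i * x (inl i).

Definition fval (t : A1 -> R) : \bar R :=
  if `[< forall i, 0 <= t i >]
  then ereal_inf [set (cost_t t x)%:E | x in flowX]
  else -oo%E.

Definition epi_negf : set ((A1 -> R) * R) :=
  [set p | (- fval p.1 <= p.2%:E)%E].

Definition comb (lam : R) (p q : (A1 -> R) * R) : (A1 -> R) * R :=
  (fun i => lam * p.1 i + (1 - lam) * q.1 i, lam * p.2 + (1 - lam) * q.2).

Definition convex_set (F : set ((A1 -> R) * R)) : Prop :=
  forall p q lam, F p -> F q -> 0 <= lam <= 1 -> F (comb lam p q).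

Definition is_face (C F : set ((A1 -> R) * R)) : Prop :=
  [/\ F `<=` C, convex_set F &
      forall p q lam, C p -> C q -> 0 < lam < 1 -> F (comb lam p q) ->
        F p /\ F q].

(* (0,1) belongs to the direction space of aff(F), i.e. to the linear span
   of the differences p - q with p, q in F *)
Definition vertical_in_dir (F : set ((A1 -> R) * R)) : Prop :=
  exists (k : nat) (lam : 'I_k -> R) (p q : 'I_k -> (A1 -> R) * R),
    [/\ forall j, F (p j) /\ F (q j),
        forall i, \sum_(j < k) lam j * ((p j).1 i - (q j).1 i) = 0 &
        \sum_(j < k) lam j * ((p j).2 - (q j).2) = 1].

Definition action_set (T : set (A1 -> R)) : Prop :=
  exists F, [/\ is_face epi_negf F, ~ vertical_in_dir F &
                T = [set t | exists z, F (t, z)]].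

Definition lp_feas (w : A1 -> R) (x : Arc -> R) : Prop :=
  [/\ forall i, x (inl i) <= w i, flowX x & forall i, 0 <= w i].

Definition lp_obj (t w : A1 -> R) (x : Arc -> R) : R :=
  \sum_(a : Arc) c a * x a + \sum_(i : A1) t i * w i.

Definition Wt (t : A1 -> R) : set (A1 -> R) :=
  [set w | exists x, lp_feas w x /\
     forall w' x', lp_feas w' x' -> lp_obj t w x <= lp_obj t w' x'].

(* W(T) = intersection of W(t), t in T (the whole R^n when T is empty) *)
Definition WT (T : set (A1 -> R)) : set (A1 -> R) :=
  [set w | forall t, T t -> Wt t w].

Definition tollfree_rel : rel V :=
  fun u v => [exists a : A0, (tl (inr a) == u) && (hd (inr a) == v)].

End NetworkPricing.

(* For tolls t >= 0, f(t) is the cost of a shortest o-d walk for the arc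
   weights c + t: walks with fewer than #|V| arcs suffice, and the capped
   distances to d are node potentials showing that no flow is cheaper.  On a
   non-vertical face every point is (t, -f(t)), and f is affine on its
   segments, so a relative-interior action t2 of T2 has the fewest "tight"
   items (zero tolls and shortest walks).  If W(T2) is contained in W(t1),
   the toll part of a shortest walk at t2 lies in W(t1), and so does that
   vector with an arbitrarily large bound on a coordinate where t2 vanishes;
   hence whatever is tight at t2 is tight at t1.  Then f stays affine a little
   beyond t2 on the line from t1, so (t2, -f(t2)) is interior to a segment of
   the epigraph ending at (t1, -f(t1)), and the face contains that endpoint. *)

From HB Require Import structures.
From mathcomp Require Import all_boot all_order all_algebra.
From mathcomp Require Import boolp classical_sets reals constructive_ereal ereal.
From mathcomp Require Import ring lra.
Set Implicit Arguments. Unset Strict Implicit. Unset Printing Implicit Defensive.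
Import Order.TTheory GRing.Theory Num.Theory.
Local Open Scope classical_set_scope.
Local Open Scope ring_scope.

Lemma ex_subset_min (X : Type) (I : finType) (P : set X) (S : X -> {set I}) :
  (exists x, P x) ->
  (forall x y, P x -> P y -> exists2 m, P m & S m \subset S x :&: S y) ->
  exists2 x, P x & forall y, P y -> S x \subset S y.
Proof.
move=> [x0 Px0] meet.
pose has_card n := `[< exists2 x, P x & #|S x| = n >].
have ex_card : exists n, has_card n by exists #|S x0|; apply/asboolP; exists x0.
case: (ex_minnP ex_card) => _ /asboolP[x Px <-] min_x; exists x => // y Py.
have [m Pm sub_m] := meet x y Px Py.
have -> : S x = S m.
  apply/esym/eqP; rewrite eqEcard (fintype.subset_trans sub_m) ?subsetIl //.
  by apply: min_x; apply/asboolP; exists m.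
exact: fintype.subset_trans sub_m (subsetIr _ _).
Qed.

Lemma sumr_delta (R : pzSemiRingType) (I : finType) (g : I -> R) (u : I) :
  \sum_v g v * (u == v)%:R = g u.
Proof.
rewrite (bigD1 u) //= eqxx mulr1 big1 ?addr0 // => v.
by rewrite eq_sym => /negPf ->; rewrite mulr0.
Qed.

Section RealFacts.
Variable R : realFieldType.

Lemma comb_eq0 (lam a b : R) : 0 < lam < 1 -> 0 <= a -> 0 <= b ->
  lam * a + (1 - lam) * b = 0 -> a = 0 /\ b = 0.
Proof.
move=> /andP[lam_gt0 lam_lt1] a_ge0 b_ge0 /eqP.
rewrite paddr_eq0 ?mulr_ge0 ?subr_ge0 ?(ltW lam_lt1) ?(ltW lam_gt0) //.
by rewrite !mulf_eq0 (gt_eqF lam_gt0) subr_eq0 (gt_eqF lam_lt1) => /andP[/eqP ? /eqP].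
Qed.

Lemma bounded_mulr_le0 (a b : R) : (forall K, 0 <= K -> a * K <= b) -> a <= 0.
Proof.
move=> bounded; rewrite leNgt; apply/negP => a_gt0.
have K_ge0 : 0 <= (`|b| + 1) / a by rewrite divr_ge0 // ltW.
have := bounded _ K_ge0; rewrite mulrCA divff ?gt_eqF // mulr1.
by have := ler_norm b; lra.
Qed.

(* [e] is the least ratio [a k / (|b k - a k| + 1)] over the [k] with [a k > 0],
   capped at [1]. *)
Lemma ex_pos_extension (I : finType) (a b : I -> R) :
  (forall k, 0 <= a k) -> (forall k, a k = 0 -> b k = 0) ->
  exists2 e, 0 < e & forall k, 0 <= (1 + e) * a k - e * b k.
Proof.
move=> a_ge0 ab0.
pose r k := a k / (`|b k - a k| + 1).
pose e := \big[Order.min/1]_(k | 0 < a k) r k.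
have e_gt0 : 0 < e by apply: lt_bigmin => // k ak; rewrite divr_gt0 ?ltr_wpDl.
exists e => // k; have [ak0|ak_gt0] := eqVneq (a k) 0.
  by rewrite ak0 ab0 // !mulr0 subr0.
have {ak_gt0}ak_gt0 : 0 < a k by rewrite lt_def ak_gt0 a_ge0.
have e_le : e * (`|b k - a k| + 1) <= a k.
  by rewrite -ler_pdivlMr ?ltr_wpDl //; apply: bigmin_le_cond.
have : e * (b k - a k) <= e * `|b k - a k|.
  by rewrite ler_wpM2l ?ler_norm ?ltW.
by move: e_le; rewrite mulrDr mulr1; lra.
Qed.

End RealFacts.

Section Walks.
Variables (V Arc : finType) (tl hd : Arc -> V) (d : V).

Fixpoint is_walk (u : V) (s : seq Arc) : bool :=
  if s is a :: s' then (tl a == u) && is_walk (hd a) s' else u == d.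

Definition nodes (u : V) (s : seq Arc) : seq V := u :: map hd s.

Fixpoint seqs_upto (n : nat) : seq (seq Arc) :=
  [::] :: (if n is n'.+1 then [seq a :: s | a <- enum Arc, s <- seqs_upto n']
           else [::]).

Lemma mem_seqs_upto n s : (size s <= n)%N -> s \in seqs_upto n.
Proof.
elim: n s => [|n IH] [|a s] //=; rewrite ?inE ?eqxx // ltnS => /IH sn.
by rewrite (allpairs_f (fun a s => a :: s)) ?mem_enum ?orbT.
Qed.

Definition walks (u : V) : seq (seq Arc) :=
  [seq s <- seqs_upto #|V| | is_walk u s].

Lemma walks_walk u s : s \in walks u -> is_walk u s.
Proof. by rewrite mem_filter => /andP[]. Qed.

Variables (R : realDomainType) (w : Arc -> R).
Hypothesis w_ge0 : forall a, 0 <= w a.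

Definition weight (s : seq Arc) : R := \sum_(a <- s) w a.

Lemma suffix_walk v s u : is_walk v s -> uniq (nodes v s) -> u \in nodes v s ->
  exists s', [/\ is_walk u s', uniq (nodes u s') & weight s' <= weight s].
Proof.
elim: s v => [|a s IH] v /=.
  by move=> vd _; rewrite inE => /eqP ->; exists [::]; rewrite /= vd.
move=> /andP[/eqP tla ws] /andP[vn un]; rewrite inE => /predU1P[->|us].
  by exists (a :: s); rewrite /= tla eqxx ws vn un.
have [s' [ws' us' le_s']] := IH _ ws un us.
by exists s'; split=> //; rewrite /weight big_cons ler_wpDl.
Qed.

Lemma uniq_walk u s : is_walk u s ->
  exists s', [/\ is_walk u s', uniq (nodes u s') & weight s' <= weight s].
Proof.
elim: s u => [|a s IH] u /=; first by move=> ud; exists [::].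
move=> /andP[/eqP tla ws]; have [s1 [ws1 us1 le_s1]] := IH _ ws.
have le_as1 : weight s1 <= weight (a :: s) by rewrite /weight big_cons ler_wpDl.
have [un|un] := boolP (u \in nodes (hd a) s1).
  have [s' [ws' us' le_s']] := suffix_walk ws1 us1 un.
  by exists s'; split=> //; apply: le_trans le_as1.
exists (a :: s1); rewrite /= tla eqxx ws1 /=.
rewrite /nodes /= in un us1 *; rewrite un us1.
by split=> //; rewrite /weight !big_cons lerD2l.
Qed.

Lemma walks_le u s : is_walk u s -> exists2 s', s' \in walks u & weight s' <= weight s.
Proof.
move=> /uniq_walk[s' [ws' /card_uniqP us' le_s']]; exists s' => //.
rewrite mem_filter ws' mem_seqs_upto //.
by have := max_card (mem (nodes u s')); rewrite us' /= size_map => /ltnW.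
Qed.

Definition dist (M : R) (v : V) : R := \big[Order.min/M]_(s <- walks v) weight s.

Lemma dist_le M v s : s \in walks v -> dist M v <= weight s.
Proof. by move=> sv; apply: ge_bigmin_seq. Qed.

Lemma dist_le_cap M v : dist M v <= M.
Proof. exact: bigmin_le_id. Qed.

Lemma dist_cases M v :
  dist M v = M \/ exists2 s, s \in walks v & dist M v = weight s.
Proof.
rewrite /dist big_seq; elim/big_ind: _ => [|x y hx hy|s sv]; [by left| |by right; exists s].
by rewrite minEle; case: ifP.
Qed.

Lemma dist_triangle M a : dist M (tl a) <= w a + dist M (hd a).
Proof.
have [->|[s sv ->]] := dist_cases M (hd a).
  by rewrite (le_trans (dist_le_cap _ _)) ?ler_wpDl.
have [s' s'v le_s'] : exists2 s', s' \in walks (tl a) & weight s' <= weight (a :: s).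
  by apply: walks_le; rewrite /= eqxx walks_walk.
apply: le_trans (dist_le M s'v) _; by rewrite /weight big_cons in le_s'.
Qed.

Lemma dist_d_le0 M : dist M d <= 0.
Proof.
have : [::] \in walks d by rewrite mem_filter /= eqxx mem_seqs_upto.
by move/(dist_le M); rewrite /weight big_nil.
Qed.

End Walks.

Section Network.
Variables (R : realType) (V A1 A0 : finType).
Notation Arc := (A1 + A0)%type.
Variables (tl hd : Arc -> V) (c : Arc -> R) (o d : V).
Hypothesis c_ge0 : forall a, 0 <= c a.

Notation is_walk := (is_walk tl hd d).
Notation walks := (walks tl hd d).

Definition chi (s : seq Arc) (a : Arc) : R := (count_mem a s)%:R.
Definition tolled (x : Arc -> R) (i : A1) : R := x (inl i).

Lemma sum_chi (h : Arc -> R) s : \sum_a h a * chi s a = \sum_(a <- s) h a.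
Proof.
elim: s => [|b s IH]; first by rewrite big_nil big1 // => a _; rewrite mulr0.
rewrite big_cons -IH -sumr_delta -big_split /=.
by apply: eq_bigr => a _; rewrite /chi /= natrD mulrDr.
Qed.

Lemma sum_inc_walk u s : is_walk u s ->
  forall v, \sum_(a <- s) inc R tl hd v a = (v == u)%:R - (v == d)%:R.
Proof.
elim: s u => [|b s IH] u /=; first by move=> /eqP -> v; rewrite big_nil subrr.
move=> /andP[/eqP tlb ws] v; rewrite big_cons (IH _ ws) /inc tlb.
by rewrite (eq_sym u) (eq_sym (hd b)) addrA subrK.
Qed.

Lemma flowX_chi s : is_walk o s -> flowX tl hd o d (chi s).
Proof.
move=> ws; split=> [v|a]; last exact: ler0n.
by rewrite sum_chi (sum_inc_walk ws).
Qed.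

Lemma connect_walk u : connect (tollfree_rel tl hd) u d -> exists s, is_walk u s.
Proof.
move=> /connectP[p]; elim: p u => [|v p IH] u /=.
  by move=> _ du; exists [::]; rewrite /= du.
move=> /andP[/existsP[a /andP[/eqP tla /eqP hda]] pth] lst.
by have [s ws] := IH v pth lst; exists (inr a :: s); rewrite /= tla hda eqxx.
Qed.

(* Node potentials: the capped distances to [d] satisfy the triangle
   inequality on every arc, which bounds the cost of any flow from below. *)
Lemma dist_potential (w : Arc -> R) M x : (forall a, 0 <= w a) ->
  flowX tl hd o d x -> dist tl hd d w M o - dist tl hd d w M d <= \sum_a w a * x a.
Proof.
move=> w_ge0 [Nx x_ge0]; set pi := dist tl hd d w M.
have -> : pi o - pi d = \sum_v pi v * bvec R o d v.
  under eq_bigr do rewrite mulrBr (eq_sym _ o) (eq_sym _ d).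
  by rewrite sumrB !sumr_delta.
under eq_bigr do rewrite -Nx mulr_sumr.
rewrite exchange_big; apply: ler_sum => a _.
under eq_bigr do rewrite mulrA.
rewrite -mulr_suml ler_wpM2r //.
under eq_bigr do rewrite mulrBr.
by rewrite sumrB !sumr_delta lerBlDr dist_triangle.
Qed.

Definition toll (t : A1 -> R) (a : Arc) : R := if a is inl i then t i else 0.
Definition arc_cost (t : A1 -> R) (a : Arc) : R := c a + toll t a.
Definition path_cost (t : A1 -> R) (s : seq Arc) : R := weight (arc_cost t) s.
Definition tcomb (lam : R) (t t' : A1 -> R) (i : A1) : R :=
  lam * t i + (1 - lam) * t' i.

Lemma arc_cost_ge0 t : (forall i, 0 <= t i) -> forall a, 0 <= arc_cost t a.
Proof. by move=> t_ge0 [i|j]; rewrite /arc_cost /= ?addr0 ?addr_ge0. Qed.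

Lemma cost_tE t x : cost_t c t x = \sum_a arc_cost t a * x a.
Proof.
rewrite /cost_t /arc_cost; under [RHS]eq_bigr do rewrite mulrDl.
rewrite big_split /=; congr (_ + _).
by rewrite big_sumType /= [X in _ = _ + X]big1 ?addr0 // => j _; rewrite mul0r.
Qed.

Lemma cost_t_chi t s : cost_t c t (chi s) = path_cost t s.
Proof. by rewrite cost_tE sum_chi. Qed.

Lemma path_cost_comb lam t t' s :
  path_cost (tcomb lam t t') s = lam * path_cost t s + (1 - lam) * path_cost t' s.
Proof.
rewrite /path_cost /weight !mulr_sumr -big_split /=.
by apply: eq_bigr => -[i|j] _; rewrite /arc_cost /tcomb /=; lra.
Qed.

Variable so : seq Arc.
Hypothesis so_walk : so \in walks o.

(* The paper's f(t) (see [fval_shortest]); the cap is itself the cost of a walk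
   in [walks o], so [shortest t] is attained. *)
Definition shortest (t : A1 -> R) : R :=
  dist tl hd d (arc_cost t) (path_cost t so) o.

Lemma shortest_le t s : s \in walks o -> shortest t <= path_cost t s.
Proof. exact: dist_le. Qed.

Lemma shortest_attained t : exists2 s, s \in walks o & shortest t = path_cost t s.
Proof.
by case: (dist_cases tl hd d (arc_cost t) (path_cost t so) o) => [eq_so|];
  first exists so.
Qed.

Lemma shortest_le_cost t x : (forall i, 0 <= t i) -> flowX tl hd o d x ->
  shortest t <= cost_t c t x.
Proof.
move=> t_ge0 fx; rewrite cost_tE.
have := dist_potential (path_cost t so) (arc_cost_ge0 t_ge0) fx.
have := dist_d_le0 tl hd d (arc_cost t) (path_cost t so); rewrite /shortest; lra.
Qed.

Lemma fval_shortest t : (forall i, 0 <= t i) -> fval tl hd c o d t = (shortest t)%:E.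
Proof.
move=> t_ge0; rewrite /fval asboolT //; apply/le_anti/andP; split.
  apply: ge_ereal_inf; have [s sw ->] := shortest_attained t.
  exists (path_cost t s)%:E => //; exists (chi s); rewrite ?cost_t_chi //.
  exact/flowX_chi/walks_walk.
by apply: le_ereal_inf_tmp => _ [x fx <-]; rewrite lee_fin shortest_le_cost.
Qed.

Lemma lp_feas_chi s : s \in walks o -> lp_feas tl hd o d (tolled (chi s)) (chi s).
Proof. by move=> sw; split=> [i||i]; [|exact/flowX_chi/walks_walk|exact: ler0n]. Qed.

Lemma lp_obj_chi t s : lp_obj c t (tolled (chi s)) (chi s) = path_cost t s.
Proof. exact: cost_t_chi. Qed.

Lemma shortest_le_lp t w x : (forall i, 0 <= t i) -> lp_feas tl hd o d w x ->
  shortest t <= lp_obj c t w x.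
Proof.
move=> t_ge0 [xw fx _]; apply: le_trans (shortest_le_cost t_ge0 fx) _.
by rewrite lerD2l; apply: ler_sum => i _; rewrite ler_wpM2l.
Qed.

Lemma Wt_of_shortest t w x : (forall i, 0 <= t i) -> lp_feas tl hd o d w x ->
  lp_obj c t w x = shortest t -> Wt tl hd c o d t w.
Proof.
move=> t_ge0 feas opt; exists x; split=> // w' x' /(shortest_le_lp t_ge0).
by rewrite opt.
Qed.

Lemma lp_obj_bump t w x i K :
  lp_obj c t (fun j => w j + K * (i == j)%:R) x = lp_obj c t w x + t i * K.
Proof.
rewrite /lp_obj -addrA; congr (_ + _).
under eq_bigr do rewrite mulrDr mulrA.
by rewrite big_split /= sumr_delta.
Qed.

Lemma epi_negf_ge0 p : epi_negf tl hd c o d p -> forall i, 0 <= p.1 i.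
Proof. by rewrite /epi_negf /= /fval; case: asboolP. Qed.

Lemma epi_negfE t z : (forall i, 0 <= t i) ->
  epi_negf tl hd c o d (t, z) = (- shortest t <= z).
Proof. by move=> t_ge0; rewrite /epi_negf /= fval_shortest // lee_fin. Qed.

(* A point of a face lying strictly above the graph of [-f] is the midpoint of
   two points of the face on one vertical line, which makes [(0,1)] a direction. *)
Lemma face_graph F t z : is_face (epi_negf tl hd c o d) F -> ~ vertical_in_dir F ->
  F (t, z) -> (forall i, 0 <= t i) /\ z = - shortest t.
Proof.
move=> [F_epi _ F_ext] not_vert Ftz.
have t_ge0 : forall i, 0 <= t i := epi_negf_ge0 (F_epi _ Ftz).
split=> //; have := F_epi _ Ftz; rewrite epi_negfE // le_eqVlt => /predU1P[//|lt_z].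
set z' := 2 * z + shortest t.
have [Fbot Ftop] : F (t, - shortest t) /\ F (t, z').
  apply: (F_ext _ _ (1 / 2)); rewrite ?epi_negfE /z' //; try lra.
  suff -> : comb (1 / 2) (t, - shortest t) (t, 2 * z + shortest t) = (t, z) by [].
  by rewrite /comb /=; congr pair; [apply: funext => i |]; lra.
case: not_vert; exists 1%N, (fun=> (z' + shortest t)^-1), (fun=> (t, z')),
  (fun=> (t, - shortest t)); split=> // [i|]; rewrite big_ord1 /= ?subrr ?mulr0 //.
by rewrite opprK mulVf // gt_eqF // /z'; lra.
Qed.

Definition gap (t : A1 -> R) (k : A1 + seq_sub (walks o)) : R :=
  match k with inl i => t i | inr s => path_cost t (val s) - shortest t end.

Definition tight (t : A1 -> R) : {set A1 + seq_sub (walks o)} :=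
  [set k | gap t k == 0].

Lemma tight_tollE t i : (inl i \in tight t) = (t i == 0).
Proof. by rewrite inE. Qed.

Lemma tight_walkE t s : (inr s \in tight t) = (path_cost t (val s) == shortest t).
Proof. by rewrite inE subr_eq0. Qed.

Lemma gap_ge0 t k : (forall i, 0 <= t i) -> 0 <= gap t k.
Proof. by case: k => [i|s] t_ge0 //=; rewrite subr_ge0 shortest_le ?(valP s). Qed.

Lemma tight_comb lam t t' : 0 < lam < 1 ->
  (forall i, 0 <= t i) -> (forall i, 0 <= t' i) ->
  shortest (tcomb lam t t') = lam * shortest t + (1 - lam) * shortest t' ->
  tight (tcomb lam t t') \subset tight t :&: tight t'.
Proof.
move=> lam01 t_ge0 t'_ge0 f_comb; apply/fintype.subsetP => k; rewrite !inE.
have -> : gap (tcomb lam t t') k = lam * gap t k + (1 - lam) * gap t' k.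
  by case: k => [i|s] //=; rewrite path_cost_comb f_comb; lra.
by move=> /eqP/comb_eq0[//|||-> ->]; rewrite ?eqxx ?gap_ge0.
Qed.

(* By convexity of the face and [face_graph], [f] is affine on the segment
   between two actions of the face, so the midpoint is tight only where both are. *)
Lemma face_relint F : is_face (epi_negf tl hd c o d) F -> ~ vertical_in_dir F ->
  (exists t z, F (t, z)) ->
  exists2 t2, (exists z, F (t2, z)) &
    forall t, (exists z, F (t, z)) -> tight t2 \subset tight t.
Proof.
move=> face not_vert [t0 [z0 Ft0]]; have [_ F_conv _] := face.
apply: (ex_subset_min (P := [set t | exists z, F (t, z)])); first by exists t0, z0.
move=> t t' [z Ftz] [z' Ftz'].
have Fmid := F_conv _ _ (1 / 2) Ftz Ftz' ltac:(lra).
have [t_ge0 zE] := face_graph face not_vert Ftz.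
have [t'_ge0 z'E] := face_graph face not_vert Ftz'.
have f_mid : 1 / 2 * z + (1 - 1 / 2) * z' = - shortest (tcomb (1 / 2) t t').
  exact: (face_graph face not_vert Fmid).2.
exists (tcomb (1 / 2) t t'); first by exists (comb (1 / 2) (t, z) (t', z')).2.
by apply: tight_comb => //; lra.
Qed.

Lemma tight_walk_transfer t1 t2 s : (forall i, 0 <= t2 i) -> s \in walks o ->
  path_cost t2 s = shortest t2 -> Wt tl hd c o d t1 (tolled (chi s)) ->
  path_cost t1 s = shortest t1.
Proof.
move=> t2_ge0 sw s_opt2 [x [feas x_opt]].
have [q qw q_opt1] := shortest_attained t1.
have := x_opt _ _ (lp_feas_chi qw); rewrite lp_obj_chi -q_opt1.
have := shortest_le_lp t2_ge0 feas; have := shortest_le t1 sw.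
by move: s_opt2; rewrite -!lp_obj_chi /lp_obj; lra.
Qed.

(* Raising the bound on coordinate [i] by any [K] keeps the toll part of [s]
   optimal for every [t] in [T], as [t i = 0]; optimality for [t1] then bounds
   [t1 i * K] uniformly in [K]. *)
Lemma tight_toll_transfer (T : set (A1 -> R)) t1 s i :
  (forall t, T t -> [/\ forall j, 0 <= t j, t i = 0 & path_cost t s = shortest t]) ->
  s \in walks o -> (forall j, 0 <= t1 j) -> WT tl hd c o d T `<=` Wt tl hd c o d t1 ->
  t1 i = 0.
Proof.
move=> T_tight sw t1_ge0 W_sub.
pose wK K j := tolled (chi s) j + K * (i == j)%:R.
have feasK K : 0 <= K -> lp_feas tl hd o d (wK K) (chi s).
  have [le_w flow _] := lp_feas_chi sw.
  by move=> K_ge0; split=> // j; rewrite /wK ?lerDl ?addr_ge0 ?mulr_ge0 ?ler0n.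
apply/le_anti; rewrite t1_ge0 andbT.
apply: (bounded_mulr_le0 (b := path_cost t1 s)) => K K_ge0.
have [|x [[_ [_ x_ge0] _] x_opt]] := W_sub (wK K).
  move=> t Tt; have [t_ge0 ti0 s_opt] := T_tight t Tt.
  apply: (Wt_of_shortest t_ge0 (feasK K K_ge0)).
  by rewrite lp_obj_bump ti0 mul0r addr0 lp_obj_chi.
have := x_opt _ _ (lp_feas_chi sw); rewrite lp_obj_bump lp_obj_chi.
have : 0 <= lp_obj c t1 (tolled (chi s)) x.
  by rewrite addr_ge0 ?sumr_ge0 // => [a|j] _; rewrite mulr_ge0 ?ler0n.
lra.
Qed.

Lemma tight_transfer (T : set (A1 -> R)) t1 t2 :
  (forall t, T t -> forall i, 0 <= t i) -> T t2 ->
  (forall t, T t -> tight t2 \subset tight t) ->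
  (forall i, 0 <= t1 i) -> WT tl hd c o d T `<=` Wt tl hd c o d t1 ->
  tight t2 \subset tight t1.
Proof.
move=> T_ge0 Tt2 relint t1_ge0 W_sub.
have tightT k t : k \in tight t2 -> T t -> k \in tight t.
  by move=> k2 Tt; apply: (fintype.subsetP (relint t Tt)).
have walk_optT (s : seq_sub (walks o)) t : inr s \in tight t2 -> T t ->
    path_cost t (val s) = shortest t.
  by move=> s2 Tt; apply/eqP; rewrite -tight_walkE tightT.
apply/fintype.subsetP => -[i|s] k2.
  have [s sw s_opt] := shortest_attained t2.
  have s2 : inr (SeqSub sw) \in tight t2 by rewrite tight_walkE s_opt.
  rewrite tight_tollE; apply/eqP/(tight_toll_transfer (T := T) (s := s)) => // t Tt.
  split; [exact: T_ge0 | by apply/eqP; rewrite -tight_tollE tightT |].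
  exact: (walk_optT _ _ s2 Tt).
rewrite tight_walkE; apply/eqP/(tight_walk_transfer (T_ge0 _ Tt2) (valP s)).
  by apply/eqP; rewrite -tight_walkE.
apply: W_sub => t Tt; apply: (Wt_of_shortest (T_ge0 t Tt) (lp_feas_chi (valP s))).
by rewrite lp_obj_chi walk_optT.
Qed.

Lemma shortest_extension t1 t2 :
  (forall i, 0 <= t1 i) -> (forall i, 0 <= t2 i) -> tight t2 \subset tight t1 ->
  exists2 e, 0 < e & (forall i, 0 <= tcomb (1 + e) t2 t1 i) /\
    (1 + e) * shortest t2 + (1 - (1 + e)) * shortest t1 <=
    shortest (tcomb (1 + e) t2 t1).
Proof.
move=> t1_ge0 t2_ge0 /fintype.subsetP sub12.
have [|e e_gt0 ext] :=
  ex_pos_extension (a := gap t2) (b := gap t1) (fun k => gap_ge0 k t2_ge0).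
  by move=> k k2; apply/eqP; have := sub12 k; rewrite !inE k2 eqxx => /(_ isT).
exists e => //; split=> [i|]; first by have := ext (inl i); rewrite /tcomb /=; lra.
have [s sw ->] := shortest_attained (tcomb (1 + e) t2 t1).
by have := ext (inr (SeqSub sw)); rewrite /= path_cost_comb; lra.
Qed.

Lemma action_set_sub (i0 : A1) T1 T2 :
  action_set tl hd c o d T1 -> action_set tl hd c o d T2 ->
  WT tl hd c o d T2 `<=` WT tl hd c o d T1 -> T1 `<=` T2.
Proof.
move=> [F1 [face1 vert1 ->]] [F2 [face2 vert2 ->]] W_sub t1 [z1 F1t1].
set T := [set t | exists z, F2 (t, z)] in W_sub *.
have [t1_ge0 _] := face_graph face1 vert1 F1t1.
have W1 : WT tl hd c o d T `<=` Wt tl hd c o d t1 by move=> w /W_sub; apply; exists z1.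
have T_ge0 t : T t -> forall i, 0 <= t i by case=> z /(face_graph face2 vert2)[].
have [[t0 Tt0]|T_0] := pselect (exists t, T t); last first.
  (* W of the empty set contains everything, even the infeasible bound [-1]. *)
  have [t Tt|x [[_ _ w_ge0] _]] := W1 (fun=> -1); first by case: T_0; exists t.
  by have := w_ge0 i0; rewrite ler0N1.
have [t2 Tt2 relint] := face_relint face2 vert2 (ex_intro _ t0 Tt0).
have [e e_gt0 [t3_ge0 f_t3]] := shortest_extension t1_ge0 (T_ge0 _ Tt2)
  (tight_transfer T_ge0 Tt2 relint t1_ge0 W1).
have [z2 F2t2] := Tt2; have [_ z2E] := face_graph face2 vert2 F2t2.
have [_ _ F2_ext] := face2.
exists (- shortest t1).
(* [(t2, -f t2)] lies strictly between [(t1, -f t1)] and a point of the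
   epigraph beyond [t2]. *)
apply: (proj1 (F2_ext _ (tcomb (1 + e) t2 t1,
  - ((1 + e) * shortest t2 + (1 - (1 + e)) * shortest t1)) (e / (1 + e)) _ _ _ _)).
- by rewrite epi_negfE.
- by rewrite epi_negfE // lerN2.
- by rewrite divr_gt0 ?ltr_pdivrMr ?mul1r ?ltrDr //; lra.
suff -> : comb (e / (1 + e)) (t1, - shortest t1) (tcomb (1 + e) t2 t1,
  - ((1 + e) * shortest t2 + (1 - (1 + e)) * shortest t1)) = (t2, z2) by [].
have e1_neq0 : 1 + e != 0 by rewrite gt_eqF //; lra.
by rewrite /comb /tcomb z2E /=; congr pair; [apply: funext => i |]; field.
Qed.

End Network.

Theorem corollary1 (R : realType) (V A1 A0 : finType)
  (tl hd : (A1 + A0)%type -> V) (c : (A1 + A0)%type -> R) (o d : V) :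
  (forall a, 0 <= c a) ->
  (0 < #|A1|)%N -> (0 < #|A0|)%N ->
  o != d ->
  connect (tollfree_rel tl hd) o d ->
  forall T1 T2 : set (A1 -> R),
    action_set tl hd c o d T1 -> action_set tl hd c o d T2 ->
    (T1 `<=` T2 <-> WT tl hd c o d T2 `<=` WT tl hd c o d T1).
Proof.
move=> c_ge0 /card_gt0P[i0 _] _ _ conn_od T1 T2 act1 act2; split.
  by move=> sub12 w w2 t /sub12; apply: w2.
have [s ws] := connect_walk conn_od.
have [so so_walk _] := walks_le c_ge0 ws.
exact: (action_set_sub c_ge0 so_walk i0 act1 act2).
Qed.
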